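(* Let $A$ be a binary matrix and let $U$ be a binary base of $A$ that is disjoint in rows. If, in addition, $A$ has the Unique base rows sums property, then $U$ spans (in the binary sense) every binary base of $A$, and thus $A$ has the Augmentation property for the binary rank.
   Context: For a binary $n\times m$ matrix $A$, $R_{binary}(A)$ is the least $k$ with $A=UV$, $U\in\{0,1\}^{n\times k}$, $V\in\{0,1\}^{k\times m}$, ordinary arithmetic; a decomposition with $k=R_{binary}(A)$ is an optimal binary decomposition. A set $X$ of $\{0,1\}$-vectors spans $y$ (binary sense) if $y=\sum_{x\in X}c_xx$ with $c_x\in\{0,1\}$, ordinary addition; it spans a set $Y$ if it spans each vector of $Y$. A binary base of $A$ is a set of $\{0,1\}$ column vectors spanning every column of $A$, of minimum cardinality among such spanning sets. A base is disjoint in rows if no two distinct vectors of it have a $1$ in the same coordinate. $A$ has the Unique base rows sums property if for every optimal binary decomposition $A=X\cdot Y$ there are no two disjoint nonempty sets of row indices $\{i_1,\dots,i_s\}$, $\{j_1,\dots,j_t\}$ with $y_{i_1}+\dots+y_{i_s}=y_{j_1}+\dots+y_{j_t}$ ($y_i$ the rows of $Y$). $A$ has the Augmentation property for the binary rank if for all binary column vectors $x_1,\dots,x_t$ with $R_{binary}(A|x_i)=R_{binary}(A)$ for all $i$, also $R_{binary}(A|x_1,\dots,x_t)=R_{binary}(A)$, where $(A|x_1,\dots,x_t)$ is $A$ with these columns appended. *)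

(* Binary matrices are 'M[bool]; arithmetic is done in int
   after the embedding toZ (false |-> 0, true |-> 1), i.e. ordinary arithmetic. *)
From mathcomp Require Import all_boot all_order all_algebra.
Set Implicit Arguments. Unset Strict Implicit. Unset Printing Implicit Defensive.
Import GRing.Theory.
Local Open Scope ring_scope.

Definition toZ (n m : nat) (A : 'M[bool]_(n, m)) : 'M[int]_(n, m) :=
  map_mx (fun b : bool => (nat_of_bool b)%:Z) A.

Definition bdecomp (n m : nat) (A : 'M[bool]_(n, m)) (k : nat) : bool :=
  [exists U : 'M[bool]_(n, k), [exists V : 'M[bool]_(k, m),
     toZ A == toZ U *m toZ V]].

Definition idb (m : nat) : 'M[bool]_m := \matrix_(i, j) (i == j).

Lemma bdecomp_exists (n m : nat) (A : 'M[bool]_(n, m)) : exists k, bdecomp A k.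
Proof.
exists m; apply/existsP; exists A; apply/existsP; exists (idb m).
have -> : toZ (idb m) = 1%:M.
  by apply/matrixP => i j; rewrite !mxE; case: (i == j).
by rewrite mulmx1.
Qed.

Definition Rbin (n m : nat) (A : 'M[bool]_(n, m)) : nat := ex_minn (bdecomp_exists A).

Definition bspans (n : nat) (X : {set 'cV[bool]_n}) (y : 'cV[bool]_n) : bool :=
  [exists S : {set 'cV[bool]_n}, (S \subset X) && (toZ y == \sum_(x in S) toZ x)].

Definition bspans_set (n : nat) (X Y : {set 'cV[bool]_n}) : bool :=
  [forall y in Y, bspans X y].

Definition spans_cols (n m : nat) (A : 'M[bool]_(n, m)) (X : {set 'cV[bool]_n}) : bool :=
  [forall j : 'I_m, bspans X (col j A)].

Definition binary_base (n m : nat) (A : 'M[bool]_(n, m)) (X : {set 'cV[bool]_n}) : bool :=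
  spans_cols A X && [forall X' : {set 'cV[bool]_n}, spans_cols A X' ==> (#|X| <= #|X'|)%N].

Definition disjoint_in_rows (n : nat) (U : {set 'cV[bool]_n}) : Prop :=
  forall u v, u \in U -> v \in U -> u != v -> forall i : 'I_n, ~~ (u i 0 && v i 0).

Definition unique_base_rows_sums (n m : nat) (A : 'M[bool]_(n, m)) : Prop :=
  forall (X : 'M[bool]_(n, Rbin A)) (Y : 'M[bool]_(Rbin A, m)),
    toZ A = toZ X *m toZ Y ->
    forall I J : {set 'I_(Rbin A)},
      I != set0 -> J != set0 -> [disjoint I & J] ->
      \sum_(i in I) row i (toZ Y) != \sum_(j in J) row j (toZ Y).

(* Augmentation property for the binary rank; the appended columns
   x_1..x_t are the columns of xs *)
Definition augmentation_property (n m : nat) (A : 'M[bool]_(n, m)) : Prop :=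
  forall (t : nat) (xs : 'M[bool]_(n, t)),
    (forall i : 'I_t, Rbin (row_mx A (col i xs)) = Rbin A) ->
    Rbin (row_mx A xs) = Rbin A.

From mathcomp Require Import all_boot all_order all_algebra.
Set Implicit Arguments. Unset Strict Implicit. Unset Printing Implicit Defensive.
Import GRing.Theory.

(* Since U is disjoint in rows, a binary combination of vectors of U is just the
   union of their supports, and two rows of A that meet the support of a common
   vector of U are equal.  Fix an optimal decomposition A = F G and a column l of
   F used by some column j0 of G.  If rows r and s of A are equal while
   F r l = 1 and F s l = 0, then the rows of G indexed by
   I = {i | F r i > F s i} and J = {i | F s i > F r i} have equal sums: J cannot
   be empty since G l j0 = 1, and otherwise this contradicts the Unique base
   rows sums property.  Hence column l of F is constant on the support of every
   vector of U, and its support is covered by U (A r j0 = 1 whenever F r l = 1),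
   so U spans it.  Every vector of a binary base B is such a column of the
   decomposition of A through B, since a vector used by no column of A could be
   removed from B.  For augmentation, a decomposition of (A | x_i) of size R(A)
   yields a binary base of A spanning x_i; U spans that base, hence x_i. *)

Lemma nat_of_bool_inj : injective nat_of_bool.
Proof. by do 2!case. Qed.

Section BoolSums.
Variables (I : finType) (P : pred I) (F : I -> bool).

Lemma sum_nat_boolE :
    (forall i i', P i -> F i -> P i' -> F i' -> i = i') ->
  \sum_(i | P i) (F i : nat) = [exists i, P i && F i].
Proof.
move=> F_uniq; case: existsP => [[i /andP [Pi Fi]] | noF].
  rewrite (bigD1 i) //= Fi big1 // => i' /andP [Pi' i'_neq_i].
  by case Fi': (F i') => //; rewrite (F_uniq i' i) ?eqxx in i'_neq_i.
rewrite big1 // => i Pi; case Fi: (F i) => //.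
by case: noF; exists i; rewrite Pi Fi.
Qed.

Lemma sum_nat_bool_le1_inj i i' :
  \sum_(j | P j) (F j : nat) <= 1 -> P i -> F i -> P i' -> F i' -> i = i'.
Proof.
move=> le1 Pi Fi Pi' Fi'; apply: contraTeq le1 => i_neq_i'.
by rewrite (bigD1 i) //= (bigD1 i') /= ?Pi' 1?eq_sym // Fi Fi'.
Qed.

End BoolSums.

Lemma sum_nat_and_cancel (I : finType) (a b c : I -> bool) :
    \sum_i (a i && c i : nat) = \sum_i (b i && c i : nat) ->
  \sum_(i in [set i | a i && ~~ b i]) (c i : nat) =
    \sum_(i in [set i | b i && ~~ a i]) (c i : nat).
Proof.
have split x y : \sum_i (x i && c i : nat) =
    \sum_i (x i && y i && c i : nat) + \sum_(i in [set i | x i && ~~ y i]) (c i : nat).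
  rewrite [X in _ + X]big_mkcond -big_split /=; apply: eq_bigr => i _.
  by rewrite inE; case: (x i); case: (y i); case: (c i).
rewrite (split a b) (split b a).
under [X in _ = X + _]eq_bigr do rewrite (andbC (b _)).
exact: addnI.
Qed.

Lemma Posz_sum (I : finType) (P : pred I) (F : I -> nat) :
  Posz (\sum_(i | P i) F i) = (\sum_(i | P i) Posz (F i))%R.
Proof. exact: (big_morph Posz PoszD). Qed.

Lemma toZE (n m : nat) (A : 'M[bool]_(n, m)) i j : toZ A i j = Posz (A i j).
Proof. by rewrite mxE. Qed.

Lemma toZ_mulmxE (n k m : nat) (X : 'M[bool]_(n, k)) (Y : 'M[bool]_(k, m)) r j :
  (toZ X *m toZ Y)%R r j = Posz (\sum_i (X r i && Y i j)).
Proof.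
by rewrite mxE Posz_sum; apply: eq_bigr => i _; rewrite !toZE -PoszM mulnb.
Qed.

Lemma toZ_mulmxP (n k m : nat) (A : 'M[bool]_(n, m)) (X : 'M[bool]_(n, k)) Y :
  toZ A = (toZ X *m toZ Y)%R <->
  forall r j, (A r j : nat) = \sum_i (X r i && Y i j : nat).
Proof.
split=> [/matrixP E r j | E]; last by apply/matrixP => r j; rewrite toZE toZ_mulmxE E.
by have := E r j; rewrite toZE toZ_mulmxE => -[].
Qed.

Lemma toZ_sum_rowE (k m : nat) (Y : 'M[bool]_(k, m)) (J : {set 'I_k}) a j :
  (\sum_(i in J) row i (toZ Y))%R a j = Posz (\sum_(i in J) (Y i j : nat)).
Proof. by rewrite summxE Posz_sum; apply: eq_bigr => i _; rewrite mxE toZE. Qed.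

Lemma toZ_sumE (n m : nat) (S : {set 'M[bool]_(n, m)}) r c :
  (\sum_(x in S) toZ x)%R r c = Posz (\sum_(x in S) (x r c : nat)).
Proof. by rewrite summxE Posz_sum; apply: eq_bigr => x _; rewrite toZE. Qed.

Lemma bspansP (n : nat) (X : {set 'cV[bool]_n}) (y : 'cV[bool]_n) :
  reflect (exists2 S : {set 'cV[bool]_n}, S \subset X &
             forall r, (y r ord0 : nat) = \sum_(x in S) (x r ord0 : nat))
          (bspans X y).
Proof.
apply: (iffP existsP) => [[S /andP [SX /eqP /matrixP E]] | [S SX E]].
  by exists S => // r; have := E r ord0; rewrite toZ_sumE toZE => -[].
exists S; rewrite SX; apply/eqP/matrixP => r c.
by rewrite ord1 toZ_sumE toZE E.
Qed.

Section BinaryRank.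
Variables (n m : nat) (A : 'M[bool]_(n, m)).

Lemma bdecompP k :
  reflect (exists (X : 'M[bool]_(n, k)) (Y : 'M[bool]_(k, m)),
             forall r j, (A r j : nat) = \sum_i (X r i && Y i j : nat))
          (bdecomp A k).
Proof.
apply: (iffP existsP) => [[X /existsP [Y /eqP /toZ_mulmxP E]] | [X [Y E]]].
  by exists X, Y.
by exists X; apply/existsP; exists Y; apply/eqP/toZ_mulmxP.
Qed.

Lemma Rbin_min k : bdecomp A k -> Rbin A <= k.
Proof. by rewrite /Rbin; case: ex_minnP => k0 _; apply. Qed.

Lemma bdecomp_Rbin : bdecomp A (Rbin A).
Proof. by rewrite /Rbin; case: ex_minnP. Qed.

Lemma spans_colsP (X : {set 'cV[bool]_n}) :
  reflect (exists S : 'I_m -> {set 'cV[bool]_n}, (forall j, S j \subset X) /\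
             forall r j, (A r j : nat) = \sum_(x in S j) (x r ord0 : nat))
          (spans_cols A X).
Proof.
apply: (iffP forallP) => [spanX | [S [SX E]] j].
  have /fin_all_exists [S HS] j : exists S : {set 'cV[bool]_n}, S \subset X /\
      forall r, (A r j : nat) = \sum_(x in S) (x r ord0 : nat).
    by have /bspansP [S SX E] := spanX j; exists S; split=> // r; rewrite -E mxE.
  by exists S; split=> [j | r j]; have [SX E] := HS j; last rewrite E.
by apply/bspansP; exists (S j) => // r; rewrite mxE E.
Qed.

Lemma bdecomp_of_spans (X : {set 'cV[bool]_n}) (S : 'I_m -> {set 'cV[bool]_n}) k :
    #|X| = k -> (forall j, S j \subset X) ->
    (forall r j, (A r j : nat) = \sum_(x in S j) (x r ord0 : nat)) ->
  exists (F : 'M[bool]_(n, k)) (G : 'M[bool]_(k, m)),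
    (forall x, x \in X -> exists i, col i F = x /\ forall j, G i j = (x \in S j)) /\
    (forall r j, (A r j : nat) = \sum_i (F r i && G i j : nat)).
Proof.
move=> cardX; case: k / cardX => SX E.
exists (\matrix_(r, i) (enum_val i : 'cV_n) r ord0)%R.
exists (\matrix_(i, j) (enum_val i \in S j))%R.
split=> [x Xx | r j].
  exists (enum_rank_in Xx x); split=> [|j]; last by rewrite mxE enum_rankK_in.
  by apply/matrixP => r c; rewrite !mxE enum_rankK_in // !ord1.
rewrite E (eq_bigl (fun x => (x \in X) && (x \in S j))) => [|x]; last first.
  by case Sx: (x \in S j); rewrite ?andbF // (subsetP (SX j) x Sx).
rewrite big_mkcondr big_enum_val /=; apply: eq_bigr => i _.
by rewrite !mxE; case: (enum_val i \in S j); rewrite ?andbT ?andbF.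
Qed.

Lemma Rbin_spans (X : {set 'cV[bool]_n}) : spans_cols A X -> Rbin A <= #|X|.
Proof.
move=> /spans_colsP [S [SX E]].
have [F [G [_ FG]]] := bdecomp_of_spans (erefl #|X|) SX E.
by apply: Rbin_min; apply/bdecompP; exists F, G.
Qed.

Lemma bdecomp_spans k :
  bdecomp A k -> exists2 X : {set 'cV[bool]_n}, #|X| <= k & spans_cols A X.
Proof.
move=> /bdecompP [F [G FG]].
exists [set col i F | i : 'I_k].
  by rewrite (leq_trans (leq_imset_card _ _)) ?card_ord.
apply/spans_colsP; exists (fun j => [set col i F | i in [pred i | G i j]]).
split=> [j | r j].
  by apply/subsetP => _ /imsetP [i _ ->]; apply: imset_f.
have /sum_nat_bool_le1_inj FG_inj : \sum_i (F r i && G i j : nat) <= 1.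
  by rewrite -FG leq_b1.
rewrite FG !sum_nat_boolE => [|x x'|]; last first.
- by move=> i i' _ Fi _ Fi'; apply: FG_inj.
- move=> /imsetP [i Gi ->] Fi /imsetP [i' Gi' ->] Fi'.
  rewrite !mxE in Fi Fi'; rewrite !inE in Gi Gi'.
  by rewrite (FG_inj i i') ?Fi ?Fi'.
apply: congr1; apply/existsP/existsP => [[i /= FGi] | [_ /andP [/imsetP [i Gi ->]]]].
  case/andP: FGi => Fi Gi; exists (col i F); rewrite mxE Fi andbT.
  by apply: imset_f.
by rewrite mxE => Fi; exists i; rewrite Fi.
Qed.

Lemma card_binary_base (B : {set 'cV[bool]_n}) : binary_base A B -> #|B| = Rbin A.
Proof.
case/andP=> spanB /forallP minB; apply/eqP; rewrite eqn_leq Rbin_spans // andbT.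
have [X cardX spanX] := bdecomp_spans bdecomp_Rbin.
by rewrite (leq_trans _ cardX) // (implyP (minB X)).
Qed.

Lemma binary_base_of_card (X : {set 'cV[bool]_n}) :
  spans_cols A X -> #|X| <= Rbin A -> binary_base A X.
Proof.
move=> spanX cardX; rewrite /binary_base spanX; apply/forallP => X'.
by apply/implyP => /Rbin_spans; apply: leq_trans.
Qed.

Lemma binary_base_used_factor (B : {set 'cV[bool]_n}) b :
    binary_base A B -> b \in B ->
  exists (F : 'M[bool]_(n, Rbin A)) (G : 'M[bool]_(Rbin A, m)) l j,
    [/\ toZ A = (toZ F *m toZ G)%R, col l F = b & G l j].
Proof.
move=> baseB Bb; have cardB := card_binary_base baseB.
case/andP: baseB => /spans_colsP [S [SB E]] /forallP minB.
have [j Sj_b] : exists j, b \in S j.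
  apply/existsP; apply: contraT; rewrite negb_exists => /forallP S_b.
  suff /(implyP (minB (B :\ b))) : spans_cols A (B :\ b).
    by rewrite (cardsD1 b B) Bb ltnn.
  apply/spans_colsP; exists S; split=> // j'; apply/subsetP => x Sx.
  by rewrite !inE (subsetP (SB j')) // andbT; apply: contraNneq (S_b j') => <-.
have [F [G [Fb FG]]] := bdecomp_of_spans cardB SB E.
have [l [Fl Gl]] := Fb b Bb.
by exists F, G, l, j; split; [apply/toZ_mulmxP | | rewrite Gl].
Qed.

End BinaryRank.

Section DisjointInRows.
Variables (n : nat) (U : {set 'cV[bool]_n}).
Hypothesis disjU : disjoint_in_rows U.

Lemma disjoint_in_rows_eq u v r :
  u \in U -> v \in U -> u r ord0 -> v r ord0 -> u = v.
Proof.
move=> Uu Uv ur vr; apply/eqP; apply: contraT => u_neq_v.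
by have := disjU Uu Uv u_neq_v r; rewrite ur vr.
Qed.

Lemma sum_disjoint_in_rows (T : {set 'cV[bool]_n}) r : T \subset U ->
  \sum_(x in T) (x r ord0 : nat) = [exists x in T, x r ord0].
Proof.
move=> TU; apply: sum_nat_boolE => u v Tu ur Tv vr.
exact: disjoint_in_rows_eq (subsetP TU u Tu) (subsetP TU v Tv) ur vr.
Qed.

Lemma bspans_disjointP (y : 'cV[bool]_n) :
  reflect (exists2 T : {set 'cV[bool]_n}, T \subset U &
             forall r, y r ord0 = [exists u in T, u r ord0])
          (bspans U y).
Proof.
apply: (iffP (bspansP U y)) => [[T TU E] | [T TU E]]; exists T => // r.
  by apply: nat_of_bool_inj; rewrite E sum_disjoint_in_rows.
by rewrite sum_disjoint_in_rows // E.
Qed.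

Lemma bspans_block_constant (y : 'cV[bool]_n) :
    (forall r, y r ord0 -> exists2 u, u \in U & u r ord0) ->
    (forall u r s, u \in U -> u r ord0 -> u s ord0 -> y r ord0 = y s ord0) ->
  bspans U y.
Proof.
move=> y_covered y_const; apply/bspans_disjointP.
exists [set u in U | [exists s, u s ord0 && y s ord0]] => [|r].
  by apply/subsetP => u; rewrite inE => /andP [].
apply/idP/exists_inP => [yr | [u]].
  have [u Uu ur] := y_covered r yr.
  by exists u; rewrite // inE Uu; apply/existsP; exists r; rewrite ur.
by rewrite inE => /andP [Uu /existsP [s /andP [us ys]]] ur; rewrite (y_const u r s).
Qed.

Lemma bspans_trans (X : {set 'cV[bool]_n}) (y : 'cV[bool]_n) :
  bspans_set U X -> bspans X y -> bspans U y.
Proof.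
move=> /forall_inP spanX /bspansP [S SX E].
have /fin_all_exists [T TE] (x : 'cV[bool]_n) : exists T : {set 'cV[bool]_n},
    x \in S -> T \subset U /\ forall r, x r ord0 = [exists u in T, u r ord0].
  case: (boolP (x \in S)) => [Sx | _]; last by exists set0.
  by have /bspans_disjointP [T TU E'] := spanX x (subsetP SX x Sx); exists T.
apply/bspans_disjointP; exists (\bigcup_(x in S) T x) => [|r].
  by apply/bigcupsP => x Sx; case: (TE x Sx).
have /sum_nat_bool_le1_inj S_uniq : \sum_(x in S) (x r ord0 : nat) <= 1.
  by rewrite -E leq_b1.
rewrite (nat_of_bool_inj (etrans (E r) (sum_nat_boolE S_uniq))).
apply/exists_inP/exists_inP => [[x Sx xr] | [u /bigcupP [x Sx Tu] ur]].
  have [_ xE] := TE x Sx; have /exists_inP [u Tu ur] : [exists u in T x, u r ord0].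
    by rewrite -xE.
  by exists u => //; apply/bigcupP; exists x.
by exists x; rewrite // (TE x Sx).2; apply/exists_inP; exists u.
Qed.

Lemma spans_cols_disjointP (m : nat) (A : 'M[bool]_(n, m)) :
  reflect (exists S : 'I_m -> {set 'cV[bool]_n}, (forall j, S j \subset U) /\
             forall r j, A r j = [exists u in S j, u r ord0])
          (spans_cols A U).
Proof.
apply: (iffP (spans_colsP A U)) => [[S [SU E]] | [S [SU E]]]; exists S; split=> // r j.
  by apply: nat_of_bool_inj; rewrite E sum_disjoint_in_rows.
by rewrite sum_disjoint_in_rows // E.
Qed.

Lemma spans_cols_rows_eq (m : nat) (A : 'M[bool]_(n, m)) u r s :
  spans_cols A U -> u \in U -> u r ord0 -> u s ord0 -> forall j, A r j = A s j.
Proof.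
move=> /spans_cols_disjointP [S [SU E]] Uu ur us j.
have Aj_u t : u t ord0 -> A t j = (u \in S j).
  move=> ut; rewrite E; apply/exists_inP/idP => [[x Sx xt] | Su]; last by exists u.
  by rewrite (disjoint_in_rows_eq Uu (subsetP (SU j) x Sx) ut xt).
by rewrite !Aj_u.
Qed.

End DisjointInRows.

Section UniqueBaseRowsSums.
Variables (n m : nat) (A : 'M[bool]_(n, m)).
Hypothesis uniqA : unique_base_rows_sums A.
Variables (F : 'M[bool]_(n, Rbin A)) (G : 'M[bool]_(Rbin A, m)).
Hypothesis FG : toZ A = (toZ F *m toZ G)%R.

Lemma factor_col_le l j0 r s :
  G l j0 -> (forall j, A r j = A s j) -> F r l -> F s l.
Proof.
move=> Gl Ars Frl; apply: contraT => Fsl; have /toZ_mulmxP FGn := FG.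
set I := [set i | F r i && ~~ F s i]; set J := [set i | F s i && ~~ F r i].
have sumIJ j : \sum_(i in I) (G i j : nat) = \sum_(i in J) (G i j : nat).
  by apply: sum_nat_and_cancel; rewrite -!FGn Ars.
have Il : l \in I by rewrite inE Frl Fsl.
have [J0 | J_neq0] := eqVneq J set0.
  by have := sumIJ j0; rewrite J0 big_set0 (bigD1 l) //= Gl.
have I_neq0 : I != set0 by apply/set0Pn; exists l.
have disjIJ : [disjoint I & J].
  by rewrite -setI_eq0; apply/eqP/setP => i; rewrite !inE; case: (F r i); case: (F s i).
case/negP: (uniqA FG I_neq0 J_neq0 disjIJ).
by apply/eqP/matrixP => a j; rewrite !toZ_sum_rowE sumIJ.
Qed.

Lemma factor_col_eq l j0 r s :
  G l j0 -> (forall j, A r j = A s j) -> F r l = F s l.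
Proof.
move=> Gl Ars; apply/idP/idP; first exact: factor_col_le Gl Ars.
by apply: factor_col_le Gl _ => j; rewrite Ars.
Qed.

End UniqueBaseRowsSums.

Section DisjointBase.
Variables (n m : nat) (A : 'M[bool]_(n, m)) (U : {set 'cV[bool]_n}).
Hypotheses (disjU : disjoint_in_rows U) (uniqA : unique_base_rows_sums A).

Lemma used_factor_col_bspans (F : 'M[bool]_(n, Rbin A)) (G : 'M[bool]_(Rbin A, m)) l j0 :
  spans_cols A U -> toZ A = (toZ F *m toZ G)%R -> G l j0 -> bspans U (col l F).
Proof.
move=> spanU FG Gl; apply: (bspans_block_constant disjU) => [r | u r s Uu ur us].
  rewrite mxE => Frl; have /(spans_cols_disjointP disjU) [S [SU E]] := spanU.
  have : A r j0.
    by rewrite -[A r j0]lt0b; have /toZ_mulmxP -> := FG; rewrite (bigD1 l) //= Frl Gl.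
  by rewrite E => /exists_inP [u Su ur]; exists u; rewrite ?(subsetP (SU j0)).
rewrite !mxE; exact: factor_col_eq Gl (spans_cols_rows_eq disjU spanU Uu ur us).
Qed.

Lemma disjoint_base_bspans_bases :
  binary_base A U -> forall B, binary_base A B -> bspans_set U B.
Proof.
case/andP=> spanU _ B baseB; apply/forall_inP => b Bb.
have [F [G [l [j [FG <- Gl]]]]] := binary_base_used_factor baseB Bb.
exact: used_factor_col_bspans spanU FG Gl.
Qed.

End DisjointBase.

Section Augmentation.
Variables (n m : nat) (A : 'M[bool]_(n, m)).

Lemma Rbin_row_mxl t (xs : 'M[bool]_(n, t)) : Rbin A <= Rbin (row_mx A xs).
Proof.
apply: Rbin_min; have /bdecompP [X [Y E]] := bdecomp_Rbin (row_mx A xs).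
apply/bdecompP; exists X, (lsubmx Y) => r j.
by rewrite -(row_mxEl A xs) E; apply: eq_bigr => i _; rewrite mxE.
Qed.

Lemma spans_cols_row_mx t (xs : 'M[bool]_(n, t)) (X : {set 'cV[bool]_n}) :
  spans_cols (row_mx A xs) X = spans_cols A X && [forall i, bspans X (col i xs)].
Proof.
apply/forallP/andP => [spanAxs | [/forallP spanA /forallP spanxs] c].
  by split; apply/forallP => j; [rewrite -(colKl j A xs) | rewrite -(colKr j A xs)].
by rewrite -(splitK c); case: (split c) => j /=; rewrite ?colKl ?colKr.
Qed.

Lemma augmentation_of_bspans_bases (U : {set 'cV[bool]_n}) :
    binary_base A U -> disjoint_in_rows U ->
    (forall B, binary_base A B -> bspans_set U B) ->
  augmentation_property A.
Proof.
move=> baseU disjU spanU_bases t xs Rbin_xs.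
apply/eqP; rewrite eqn_leq Rbin_row_mxl andbT.
rewrite -(card_binary_base baseU) Rbin_spans // spans_cols_row_mx.
case/andP: baseU => -> _; apply/forallP => i /=.
have [B cardB] := bdecomp_spans (bdecomp_Rbin (row_mx A (col i xs))).
rewrite Rbin_xs spans_cols_row_mx in cardB * => /andP [spanB /forallP /(_ ord0) spanB_xi].
rewrite col_id in spanB_xi; have baseB := binary_base_of_card spanB cardB.
exact: (bspans_trans disjU (spanU_bases B baseB) spanB_xi).
Qed.

End Augmentation.

Theorem mainTheorem17 (n m : nat) (A : 'M[bool]_(n, m)) (U : {set 'cV[bool]_n}) :
  binary_base A U -> disjoint_in_rows U -> unique_base_rows_sums A ->
  (forall B : {set 'cV[bool]_n}, binary_base A B -> bspans_set U B) /\
  augmentation_property A.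
Proof.
move=> baseU disjU uniqA.
have spanU_bases := disjoint_base_bspans_bases disjU uniqA baseU.
by split; last exact: augmentation_of_bspans_bases baseU disjU spanU_bases.
Qed.
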